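(* Let $1\gg p,q\gg n^{-1}$. Let $G$ be an $n$-vertex $q$-cut-dense graph and let $S$ be a $p$-random subset of $V(G)$. Then with high probability every induced subgraph of $G$ whose vertex set contains $S$ is $p^{q^{-4}}q^5$-cut-dense.
   Context: A graph $G$ is $q$-cut-dense if for every partition $V(G)=A\cup B$ into disjoint sets, the number of edges between $A$ and $B$ is at least $q|A||B|$. A $p$-random subset contains each vertex independently with probability $p$. ''$1\gg p,q\gg n^{-1}$'' means $p,q$ are sufficiently small positive constants and $n$ is sufficiently large in terms of $p,q$; ''with high probability'' means with probability tending to $1$ as $n\to\infty$. *)

From HB Require Import structures.
From mathcomp Require Import all_boot all_order all_algebra.
From mathcomp Require Import reals exp.
Set Implicit Arguments. Unset Strict Implicit. Unset Printing Implicit Defensive.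
Import Order.TTheory GRing.Theory Num.Theory.
Local Open Scope ring_scope.

Definition simple_graph (T : finType) (e : rel T) : Prop :=
  (forall x y, e x y = e y x) /\ (forall x, ~~ e x x).

Definition e_between (T : finType) (e : rel T) (A B : {set T}) : nat :=
  #|[set xy : T * T | [&& xy.1 \in A, xy.2 \in B & e xy.1 xy.2]]|.

Definition cut_dense_on (R : realType) (T : finType) (e : rel T)
    (U : {set T}) (q : R) : bool :=
  [forall A : {set T}, forall B : {set T},
     ((A :&: B == set0) && (A :|: B == U)) ==>
     (q * #|A|%:R * #|B|%:R <= (e_between e A B)%:R)].

Definition cut_dense (R : realType) (T : finType) (e : rel T) (q : R) : bool :=
  cut_dense_on e [set: T] q.

(* Probability that a p-random subset S of T (each vertex independently with
   probability p) satisfies the predicate P. *)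
Definition prob_random_subset (R : realType) (T : finType) (p : R)
    (P : pred {set T}) : R :=
  \sum_(S : {set T} | P S) p ^+ #|S| * (1 - p) ^+ (#|T| - #|S|).

From HB Require Import structures.
From mathcomp Require Import all_boot all_order all_algebra.
From mathcomp Require Import reals exp sequences.
From mathcomp Require Import ring lra.
Import Order.TTheory GRing.Theory Num.Theory.
Set Implicit Arguments. Unset Strict Implicit. Unset Printing Implicit Defensive.
Local Open Scope ring_scope.

(* Fix a vertex u and a threshold th = q^2 n / (4K); put L_0(u) = N(u) and let
   L_(j+1)(u) be the set of vertices with at least th neighbours in L_j(u).
   Cut-density gives minimum degree about q n and, applied to the cut between
   L_0(u) ∪ ... ∪ L_k(u) and its complement, shows that this complement loses
   q^2 n / 8 vertices at each step; as q^2 K > 8, every vertex lies in some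
   L_j(u) with j <= K.  By a Chernoff bound and a union bound over the n^2 K
   triples (u, v, j), with high probability S contains p th / 4 neighbours in
   L_j(u) of every v in L_(j+1)(u).
   Now split a superset of such an S as A ∪ B, and call a vertex of B rich when
   it has at least D = p th / 8 neighbours in A (and symmetrically).  Suppose B
   has fewer than D rich vertices.  If y ∈ B is poor and y ∈ L_(j+1)(x), more
   than D of the neighbours of y in S ∩ L_j(x) lie in B, so one of them is
   poor; descending to L_0(x) = N(x) shows that x has D neighbours in B.  Hence
   every poor vertex of A is adjacent to every poor vertex of B, and counting
   edges at rich and at poor vertices gives
   e(A, B) >= (D / 3n)^2 |A| |B| = (p q^2 / (96 K))^2 |A| |B|.  Since
   q^2 K <= 9, this density is at least (p q^4 / 864)^2, which beats
   p^(q^-4) q^5 once q is small. *)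

Section RandomSubset.
Variables (R : realType) (T : finType) (p : R).
Hypothesis p01 : 0 <= p <= 1.

Definition subset_weight (S : {set T}) : R :=
  p ^+ #|S| * (1 - p) ^+ (#|T| - #|S|).

Lemma prob_random_subsetE (P : pred {set T}) :
  prob_random_subset p P = \sum_(S | P S) subset_weight S.
Proof. by []. Qed.

Lemma subset_weightE (S : {set T}) :
  subset_weight S = \prod_i (if i \in S then p else 1 - p).
Proof.
rewrite /subset_weight (bigID [in S]) /=; symmetry.
rewrite (eq_bigr (fun=> p)) => [|i ->] //.
rewrite [X in _ * X](eq_bigr (fun=> 1 - p)) => [|i /negbTE ->] //.
rewrite !prodr_const -(cardsC S) addKn; congr (_ ^+ _ * _ ^+ _).
by apply: eq_card => i; rewrite !inE.
Qed.

Lemma subset_weight_ge0 (S : {set T}) : 0 <= subset_weight S.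
Proof. by case/andP: p01 => p0 p1; rewrite mulr_ge0 ?exprn_ge0 ?subr_ge0. Qed.

Lemma sum_subset_weight_prod (g : T -> R) :
  \sum_(S : {set T}) subset_weight S * \prod_(i in S) g i
  = \prod_i (p * g i + (1 - p)).
Proof.
rewrite (bigA_distr 1 +%R (fun i => p * g i) (fun=> 1 - p)).
apply: eq_bigr => S _; rewrite subset_weightE (big_mkcond [in S]) -big_split.
by apply: eq_bigr => i _ /=; case: (i \in S); rewrite ?mulr1 ?mul1r.
Qed.

Lemma sum_subset_weight : \sum_(S : {set T}) subset_weight S = 1.
Proof.
transitivity (\sum_(S : {set T}) subset_weight S * \prod_(i in S) (1 : R)).
  by apply: eq_bigr => S _; rewrite big1 ?mulr1.
by rewrite sum_subset_weight_prod big1 // => i _; rewrite mulr1 subrKC.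
Qed.

Lemma prob_random_subsetC (P : pred {set T}) :
  prob_random_subset p P = 1 - prob_random_subset p (predC P).
Proof. by rewrite -sum_subset_weight (bigID P) /= addrK. Qed.

Lemma le_prob_random_subset (P Q : pred {set T}) :
  (forall S, P S -> Q S) -> prob_random_subset p P <= prob_random_subset p Q.
Proof.
move=> PQ; rewrite !prob_random_subsetE big_mkcond [X in _ <= X]big_mkcond /=.
apply: ler_sum => S _; case: ifP => [/PQ -> //|_].
by case: ifP; rewrite ?subset_weight_ge0.
Qed.

Lemma prob_random_subset_union_bound (I : finType) (P : I -> pred {set T}) :
  prob_random_subset p (fun S => [exists i, P i S])
  <= \sum_i prob_random_subset p (P i).
Proof.
rewrite prob_random_subsetE.
under [X in _ <= X]eq_bigr do rewrite prob_random_subsetE big_mkcond.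
rewrite exchange_big /= big_mkcond /=; apply: ler_sum => S _.
case: existsP => [[i Pi]|_]; last first.
  by rewrite sumr_ge0 // => i _; case: ifP; rewrite ?subset_weight_ge0.
rewrite (bigD1 i) //= Pi lerDl sumr_ge0 // => j _.
by case: ifP; rewrite ?subset_weight_ge0.
Qed.

(* Chernoff bound, from Markov's inequality applied to 2^-|Z :&: S| *)
Lemma prob_card_setI_lt (Z : {set T}) (t : R) :
  prob_random_subset p (fun S => #|Z :&: S|%:R < t)
  <= expR (t - p * #|Z|%:R / 2).
Proof.
have [p0 p1] := andP p01.
pose g i : R := if i \in Z then 2^-1 else 1.
have prod_g (S : {set T}) : \prod_(i in S) g i = 2^-1 ^+ #|Z :&: S|.
  rewrite (bigID [in Z]) /= [X in _ * X]big1 => [|i /andP[_ /negbTE]]; last first.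
    by rewrite /g => ->.
  rewrite mulr1 (eq_bigr (fun=> 2^-1)) => [|i /andP[_]]; last by rewrite /g => ->.
  by rewrite prodr_const; congr (_ ^+ _); apply: eq_card => i; rewrite !inE andbC.
have g_ge0 (S : {set T}) : 0 <= \prod_(i in S) g i by rewrite prod_g exprn_ge0 ?invr_ge0.
have markov (S : {set T}) : #|Z :&: S|%:R < t -> 1 <= expR t * \prod_(i in S) g i.
  move=> /ltW lt_t; rewrite prod_g; set k := #|Z :&: S|.
  have two_le : (2 : R) ^+ k <= expR k%:R.
    rewrite -[k%:R]mulr1 expRM_natl lerXn2r ?nnegrE ?expR_ge0 //.
    by have := expR_ge1Dx (1 : R); lra.
  have half_k : (2 : R) ^+ k * 2^-1 ^+ k = 1.
    rewrite -exprMn mulfV ?expr1n //; lra.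
  rewrite -[X in X <= _]half_k ler_pM2r ?exprn_gt0 ?invr_gt0 //.
  by rewrite (le_trans two_le) // ler_expR.
apply: (@le_trans _ _ (expR t * \sum_S subset_weight S * \prod_(i in S) g i)).
  rewrite prob_random_subsetE mulr_sumr big_mkcond /=; apply: ler_sum => S _.
  case: ifP => [/markov|_]; last by rewrite mulr_ge0 ?expR_ge0 // mulr_ge0 ?subset_weight_ge0.
  by rewrite mulrCA -{1}[subset_weight S]mulr1; apply: ler_wpM2l; rewrite ?subset_weight_ge0.
rewrite sum_subset_weight_prod (bigID [in Z]) /= [X in _ * (_ * X)]big1; last first.
  by move=> i /negbTE; rewrite /g => ->; rewrite mulr1 subrKC.
rewrite mulr1 (eq_bigr (fun=> 1 - p / 2)) => [|i]; last by rewrite /g => ->; field.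
rewrite prodr_const expRD ler_wpM2l ?expR_ge0 //.
rewrite (_ : - (p * #|Z|%:R / 2) = - (p / 2) * #|Z|%:R); last by field.
rewrite expRM_natr lerXn2r ?nnegrE ?expR_ge0 //; first lra.
by have := expR_ge1Dx (- (p / 2)); lra.
Qed.
End RandomSubset.

Section Neighbourhoods.
Variables (T : finType) (e : rel T).

Definition nbhd (v : T) : {set T} := [set w | e v w].

Lemma e_between_suml (A B : {set T}) :
  e_between e A B = (\sum_(x in A) #|nbhd x :&: B|)%N.
Proof.
transitivity (\sum_x \sum_y ([&& x \in A, y \in B & e x y] : nat))%N.
  rewrite /e_between pair_big /= -sum1_card big_mkcond.
  by apply: eq_bigr => -[x y] _; rewrite inE.
rewrite [RHS]big_mkcond; apply: eq_bigr => x _.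
case: (x \in A) => /=; last by rewrite big1.
by rewrite -sum1_card [RHS]big_mkcond; apply: eq_bigr => y _; rewrite !inE andbC.
Qed.

Lemma e_betweenC (A B : {set T}) :
  (forall x y, e x y = e y x) -> e_between e A B = e_between e B A.
Proof.
move=> e_sym; have swapK : involutive (fun xy : T * T => (xy.2, xy.1)) by case.
rewrite /e_between -(card_imset _ (inv_inj swapK)) (can2_imset_pre _ swapK swapK).
by apply: eq_card => -[x y]; rewrite !inE /= e_sym andbCA.
Qed.

End Neighbourhoods.

Definition rich (R : realType) (T : finType) (e : rel T) (D : R) (A B : {set T})
  : {set T} := [set z in B | D <= #|nbhd e z :&: A|%:R].

Section Rich.
Variables (R : realType) (T : finType) (e : rel T) (D : R) (A B : {set T}).

Lemma in_rich z : (z \in rich e D A B) = (z \in B) && (D <= #|nbhd e z :&: A|%:R).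
Proof. by rewrite inE. Qed.

Lemma poor_lt z : z \in B :\: rich e D A B -> #|nbhd e z :&: A|%:R < D.
Proof. by rewrite in_setD in_rich ltNge => /andP[/nandP[/negP|] //]. Qed.

Lemma rich_sub : rich e D A B \subset B.
Proof. by apply/subsetP => z; rewrite in_rich => /andP[]. Qed.

Lemma e_between_ge_rich : D * #|rich e D A B|%:R <= (e_between e B A)%:R.
Proof.
rewrite e_between_suml natr_sum (big_setID (rich e D A B)) /= (setIidPr rich_sub).
rewrite -[X in X <= _]addr0 lerD ?sumr_ge0 // [X in X <= _]mulr_natr.
by rewrite -sumr_const; apply: ler_sum => z; rewrite in_rich => /andP[].
Qed.

Lemma e_between_le_rich : 0 <= D ->
  (e_between e B A)%:R <= #|rich e D A B|%:R * #|A|%:R + #|B|%:R * D.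
Proof.
move=> D_ge0; rewrite e_between_suml natr_sum (big_setID (rich e D A B)) /=.
rewrite (setIidPr rich_sub) lerD //.
  rewrite [X in _ <= X]mulr_natl -sumr_const; apply: ler_sum => z _.
  by rewrite ler_nat subset_leq_card ?subsetIr.
rewrite [X in _ <= X]mulr_natl.
apply: le_trans (_ : \sum_(z in B :\: rich e D A B) D <= _).
  by apply: ler_sum => z /poor_lt /ltW.
by rewrite sumr_const ler_wpMn2l // subset_leq_card ?subsetDl.
Qed.

End Rich.

Section CutDense.
Variables (R : realType) (T : finType) (e : rel T) (q : R).

Lemma cut_dense_onW (U : {set T}) (q' : R) :
  q' <= q -> cut_dense_on e U q -> cut_dense_on e U q'.
Proof.
move=> le_q /forallP dense; apply/forallP => A; apply/forallP => B.
apply/implyP => /(implyP (forallP (dense A) B)); apply: le_trans.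
by rewrite ler_wpM2r ?ler_wpM2r.
Qed.

Hypotheses (e_simple : simple_graph e) (e_dense : cut_dense e q).

Lemma cut_dense_setC (X : {set T}) :
  q * #|X|%:R * #|~: X|%:R <= (e_between e X (~: X))%:R.
Proof.
by have /forallP/(_ X)/forallP/(_ (~: X))/implyP := e_dense; apply; rewrite setICr setUCr !eqxx.
Qed.

Lemma cut_dense_min_degree (u : T) : q * (#|T|%:R - 1) <= #|nbhd e u|%:R.
Proof.
have := cut_dense_setC [set u]; rewrite cards1 mulr1 cardsC1 e_between_suml big_set1.
have -> : nbhd e u :&: ~: [set u] = nbhd e u.
  by apply/setIidPl/subsetP => w; rewrite !inE; apply: contraTneq => ->; case: e_simple.
have T_gt0 : (0 < #|T|)%N by apply/card_gt0P; exists u.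
by rewrite -subn1 natrB.
Qed.

Lemma card_rich_setC_ge (X : {set T}) : 0 <= q -> (0 < #|X|)%N ->
  q * #|~: X|%:R / 2 <= #|rich e (q * #|X|%:R / 2) X (~: X)|%:R.
Proof.
move=> q_ge0 X_gt0; rewrite -(@ler_pM2r _ #|X|%:R) ?ltr0n //.
have D_ge0 : 0 <= q * #|X|%:R / 2 by rewrite !mulr_ge0 ?invr_ge0.
have := e_between_le_rich e X (~: X) D_ge0.
rewrite -e_betweenC; last by case: e_simple.
have := cut_dense_setC X; lra.
Qed.

End CutDense.

Lemma card_bigcup_le (I T : finType) (P : pred I) (F : I -> {set T}) :
  (#|\bigcup_(i | P i) F i| <= \sum_(i | P i) #|F i|)%N.
Proof.
elim/big_rec2: _ => [|i n U _ le_U]; first by rewrite cards0.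
exact: leq_trans (leq_card_setU _ _) (leq_add (leqnn _) le_U).
Qed.

Section Levels.
Variables (R : realType) (T : finType) (e : rel T) (th : R) (u : T).

Fixpoint level (j : nat) : {set T} :=
  if j is j'.+1 then [set v | th <= #|nbhd e v :&: level j'|%:R] else nbhd e u.

Definition reach (k : nat) : {set T} := \bigcup_(j < k.+1) level j.

Lemma nbhd_sub_reach k : nbhd e u \subset reach k.
Proof. exact: (bigcup_sup ord0). Qed.

Lemma reach_subS k : reach k \subset reach k.+1.
Proof. by apply/bigcupsP => j _; apply: (bigcup_sup (widen_ord (leqnSn _) j)). Qed.

Lemma mem_reach v k : reflect (exists2 j, (j <= k)%N & v \in level j) (v \in reach k).
Proof.
apply: (iffP bigcupP) => [[j _ v_j] | [j le_jk v_j]]; first by exists j => //; rewrite -ltnS.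
by exists (Ordinal (le_jk : j < k.+1)%N).
Qed.

Lemma reach_step k y : 0 <= th ->
  k.+1%:R * th <= #|nbhd e y :&: reach k|%:R -> y \in reach k.+1.
Proof.
move=> th_ge0 many; apply/mem_reach.
have [j th_le] : exists j : 'I_k.+1, th <= #|nbhd e y :&: level j|%:R.
  apply/existsP; apply: contraLR many => /existsPn small; rewrite -ltNge.
  have sub : nbhd e y :&: reach k \subset \bigcup_(j < k.+1) (nbhd e y :&: level j).
    by apply/subsetP => v /setIP[yv /bigcupP[j _ vj]]; apply/bigcupP; exists j => //; apply/setIP.
  apply: le_lt_trans (_ : _ <= \sum_(j < k.+1) #|nbhd e y :&: level j|%:R) _.
    by rewrite -natr_sum ler_nat (leq_trans (subset_leq_card sub)) ?card_bigcup_le.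
  rewrite [X in _ < X]mulr_natl -[k.+1 in X in _ < X]card_ord -sumr_const.
  apply: ltr_sum => [|j _]; first by apply/hasP; exists ord0; rewrite ?mem_index_enum.
  by rewrite ltNge small.
by exists j.+1; rewrite ?inE.
Qed.

End Levels.

Section Cover.
Variables (R : realType) (T : finType) (e : rel T) (q th : R) (u : T).
Hypotheses (e_simple : simple_graph e) (e_dense : cut_dense e q).
Hypotheses (q_gt0 : 0 < q) (q_le1 : q <= 1) (T_ge4 : 4 <= #|T|%:R :> R).
Hypothesis th_ge0 : 0 <= th.

Let qn_ge0 : 0 <= q * #|T|%:R. Proof. exact: mulr_ge0 (ltW q_gt0) (ler0n _ _). Qed.

Let sqr_qn_ge0 : 0 <= q ^+ 2 * #|T|%:R. Proof. exact: mulr_ge0 (sqr_ge0 q) (ler0n _ _). Qed.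

Let sqr_q_mul_le : q ^+ 2 * #|T|%:R <= q * #|T|%:R.
Proof. by rewrite expr2 -mulrA; apply: ler_piMl qn_ge0 q_le1. Qed.

Let q_mul_le : q * 4 <= q * #|T|%:R.
Proof. by rewrite ler_pM2l. Qed.

Lemma card_reach_ge k : q * #|T|%:R / 2 <= #|reach e th u k|%:R.
Proof.
have := cut_dense_min_degree e_simple e_dense u.
have := subset_leq_card (nbhd_sub_reach e th u k); rewrite -(ler_nat R).
have : 0 <= q * (#|T|%:R - 2) by rewrite mulr_ge0 ?subr_ge0 ?(ltW q_gt0) //; move: T_ge4; lra.
lra.
Qed.

Lemma mem_reachS k y : k.+1%:R * th <= q ^+ 2 * #|T|%:R / 4 ->
  q ^+ 2 * #|T|%:R / 4 <= #|nbhd e y :&: reach e th u k|%:R ->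
  y \in reach e th u k.+1.
Proof. by move=> le_th many; apply: reach_step => //; apply: le_trans many. Qed.

Lemma reach_succ_full k : k.+1%:R * th <= q ^+ 2 * #|T|%:R / 4 ->
  #|~: reach e th u k|%:R < q * #|T|%:R / 4 -> reach e th u k.+1 = setT.
Proof.
move=> le_th small; apply/setP => y; rewrite inE; apply: mem_reachS => //.
have : #|nbhd e y|%:R <= #|nbhd e y :&: reach e th u k|%:R + #|~: reach e th u k|%:R :> R.
  rewrite -natrD ler_nat -[X in (X <= _)%N](cardsID (reach e th u k)) leq_add2l.
  by rewrite subset_leq_card // setDE subsetIr.
have := cut_dense_min_degree e_simple e_dense y.
have := sqr_qn_ge0; have := sqr_q_mul_le; have := q_mul_le; lra.
Qed.

Lemma reach_succ_shrinks k : k.+1%:R * th <= q ^+ 2 * #|T|%:R / 4 ->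
  q * #|T|%:R / 4 <= #|~: reach e th u k|%:R ->
  #|~: reach e th u k.+1|%:R + q ^+ 2 * #|T|%:R / 8 <= #|~: reach e th u k|%:R.
Proof.
move=> le_th large; set X := reach e th u k.
set G := rich e (q * #|X|%:R / 2) X (~: X).
have X_ge : q * #|T|%:R / 2 <= #|X|%:R := card_reach_ge k.
have X_gt0 : (0 < #|X|)%N.
  by rewrite -(ltr_nat R); apply: lt_le_trans X_ge; have := q_mul_le; have := q_gt0; lra.
have G_sub : G \subset reach e th u k.+1.
  apply/subsetP => y; rewrite inE => /andP[_ rich_y]; apply: mem_reachS => //.
  by apply: le_trans rich_y; have := ler_wpM2l (ltW q_gt0) X_ge; lra.
have : #|~: reach e th u k.+1|%:R <= #|~: X|%:R - #|G|%:R :> R.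
  rewrite -natrB ?subset_leq_card ?rich_sub // ler_nat.
  have /setIidPr G_subC : G \subset ~: X := rich_sub _ _ _ _.
  by rewrite -G_subC -cardsD subset_leq_card // setDE -setCU setCS subUset reach_subS.
have := card_rich_setC_ge e_simple e_dense (ltW q_gt0) X_gt0.
have := ler_wpM2l (ltW q_gt0) large; lra.
Qed.

Lemma reach_full_or_shrinks k : k%:R * th <= q ^+ 2 * #|T|%:R / 4 ->
  reach e th u k = setT \/
  #|~: reach e th u k|%:R + k%:R * (q ^+ 2 * #|T|%:R / 8) <= #|T|%:R.
Proof.
elim: k => [_|k IH le_th]; first by right; rewrite mul0r addr0 ler_nat max_card.
have le_k : k%:R * th <= k.+1%:R * th by rewrite -natr1 mulrDl mul1r lerDl.
have [full|shrunk] := IH (le_trans le_k le_th).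
  by left; apply/eqP; rewrite eqEsubset subsetT -full reach_subS.
have [small|large] := ltrP #|~: reach e th u k|%:R (q * #|T|%:R / 4).
  by left; apply: reach_succ_full.
right; have := reach_succ_shrinks le_th large; rewrite -[k.+1%:R]natr1; lra.
Qed.

Lemma reach_cover K : K%:R * th <= q ^+ 2 * #|T|%:R / 4 -> 8 < q ^+ 2 * K%:R ->
  reach e th u K = setT.
Proof.
move=> le_th K_large; case: (reach_full_or_shrinks le_th) => // shrunk; exfalso.
have : K%:R * (q ^+ 2 * #|T|%:R / 8) <= #|T|%:R.
  by apply: le_trans shrunk; rewrite lerDr.
have : 0 < (q ^+ 2 * K%:R - 8) * #|T|%:R.
  by rewrite mulr_gt0 ?subr_gt0 //; apply: lt_le_trans T_ge4.
lra.
Qed.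

End Cover.

Definition hits_levels (R : realType) (T : finType) (e : rel T) (th : R) (K : nat)
    (d : R) (S : {set T}) : bool :=
  [forall u, forall v, forall j : 'I_K,
     (v \in level e th u j.+1) ==> (d <= #|nbhd e v :&: level e th u j :&: S|%:R)].

Lemma prob_hits_levels (R : realType) (T : finType) (e : rel T) (th p : R) (K : nat) :
  0 <= p <= 1 ->
  1 - (#|T| * #|T| * K)%:R * expR (- (p * th / 4))
  <= prob_random_subset p (hits_levels e th K (p * th / 4)).
Proof.
move=> p01; have [p_ge0 _] := andP p01.
pose bad (i : T * T * 'I_K) (S : {set T}) :=
  (i.1.2 \in level e th i.1.1 i.2.+1) &&
  (#|nbhd e i.1.2 :&: level e th i.1.1 i.2 :&: S|%:R < p * th / 4).
have bad_le i : prob_random_subset p (bad i) <= expR (- (p * th / 4)).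
  case: i => [[u v] j]; rewrite /bad /=.
  have [v_in|_] := boolP (v \in level e th u j.+1); last first.
    by rewrite prob_random_subsetE big_pred0 // expR_ge0.
  apply: le_trans (prob_card_setI_lt p01 _ _) _; rewrite ler_expR.
  move: v_in; rewrite inE => /(ler_wpM2l p_ge0); lra.
rewrite prob_random_subsetC lerD2l lerN2.
apply: le_trans (_ : prob_random_subset p (fun S => [exists i, bad i S]) <= _).
  apply: le_prob_random_subset => // S /forallPn[u /forallPn[v /forallPn[j]]].
  by rewrite negb_imply -ltNge => bad_uvj; apply/existsP; exists (u, v, j).
apply: le_trans (prob_random_subset_union_bound p01 bad) _.
apply: le_trans (ler_sum _ (fun i _ => bad_le i)) _.
by rewrite sumr_const !card_prod card_ord mulr_natl.
Qed.

Section PoorVertices.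
Variables (R : realType) (T : finType) (e : rel T) (th D : R) (K : nat).
Variables (S A B : {set T}).
Hypotheses (S_hits : hits_levels e th K (2 * D) S) (S_sub : S \subset A :|: B).

Lemma poor_many_nbrs_in_level a z j : (j < K)%N -> z \in B :\: rich e D A B ->
  z \in level e th a j.+1 -> D < #|nbhd e z :&: level e th a j :&: S :&: B|%:R.
Proof.
move=> lt_jK z_poor z_in; set W := nbhd e z :&: level e th a j :&: S.
have W_ge : 2 * D <= #|W|%:R.
  by have /forallP/(_ a)/forallP/(_ z)/forallP/(_ (Ordinal lt_jK))/implyP := S_hits; apply.
have W_split : #|W|%:R <= #|W :&: A|%:R + #|W :&: B|%:R :> R.
  have /setIidPl W_AB : W \subset A :|: B by rewrite (subset_trans (subsetIr _ _)).
  by rewrite -natrD ler_nat -{1}W_AB setIUr leq_card_setU.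
have WA_le : #|W :&: A|%:R <= #|nbhd e z :&: A|%:R :> R.
  by rewrite ler_nat subset_leq_card // setSI // /W -!setIA subsetIl.
have := poor_lt z_poor; lra.
Qed.

Lemma poor_level_rich a z j : #|rich e D A B|%:R < D -> (j < K)%N ->
  z \in B :\: rich e D A B -> z \in level e th a j.+1 -> D <= #|nbhd e a :&: B|%:R.
Proof.
move=> few_rich; elim: j z => [|j IH] z lt_jK z_poor z_in.
  apply: ltW (lt_le_trans (poor_many_nbrs_in_level lt_jK z_poor z_in) _).
  by rewrite ler_nat subset_leq_card // setSI // (subset_trans (subsetIl _ _)) ?subsetIr.
have many := poor_many_nbrs_in_level lt_jK z_poor z_in.
have /subsetPn[z' z'_in z'_poor] :
    ~~ (nbhd e z :&: level e th a j.+1 :&: S :&: B \subset rich e D A B).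
  apply: contraTN many => /subset_leq_card; rewrite -(ler_nat R) -leNgt => sub.
  exact: le_trans sub (ltW few_rich).
move: z'_in => /setIP[/setIP[/setIP[_ z'_lev] _] z'_B].
by apply: (IH z' (ltnW lt_jK)) => //; rewrite in_setD z'_poor.
Qed.

Hypothesis levels_cover : forall u v, exists2 j, (j <= K)%N & v \in level e th u j.

Lemma poor_adjacent x y : #|rich e D A B|%:R < D ->
  x \in A :\: rich e D B A -> y \in B :\: rich e D A B -> e x y.
Proof.
move=> few_rich x_poor y_poor; have [[|j] le_jK y_in] := levels_cover x y.
  by rewrite inE in y_in.
have := poor_level_rich few_rich le_jK y_poor y_in.
by rewrite leNgt (poor_lt x_poor).
Qed.

Hypothesis e_simple : simple_graph e.
Hypotheses (D_gt0 : 0 < D) (D_le : D <= #|T|%:R).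

Let rich_B_le : D * #|rich e D A B|%:R <= (e_between e A B)%:R.
Proof. by rewrite e_betweenC; [apply: e_between_ge_rich | case: e_simple]. Qed.

Lemma e_between_ge_few_rich : #|rich e D A B|%:R < D ->
  D * #|A|%:R * #|B|%:R <= 3 * #|T|%:R * (e_between e A B)%:R.
Proof.
move=> few_rich; set E : R := (e_between e A B)%:R; set n : R := #|T|%:R.
set LA := A :\: rich e D B A; set LB := B :\: rich e D A B.
have HA_le : D * #|rich e D B A|%:R <= E := e_between_ge_rich e D B A.
have HB_le : D * #|rich e D A B|%:R <= E := rich_B_le.
have L_le : #|LB|%:R * #|LA|%:R <= E.
  apply: le_trans (e_between_ge_rich e #|LB|%:R B A); rewrite ler_wpM2l // ler_nat.
  apply/subset_leq_card/subsetP => x x_poor; rewrite in_rich (subsetP (subsetDl _ _) _ x_poor) /=.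
  rewrite ler_nat subset_leq_card //; apply/subsetP => y y_poor.
  by rewrite !inE (poor_adjacent few_rich x_poor y_poor) (subsetP (subsetDl _ _) _ y_poor).
have cardA : #|A|%:R = #|rich e D B A|%:R + #|LA|%:R :> R.
  by rewrite -natrD -(cardsID (rich e D B A) A) (setIidPr (rich_sub _ _ _ _)).
have cardB : #|B|%:R = #|rich e D A B|%:R + #|LB|%:R :> R.
  by rewrite -natrD -(cardsID (rich e D A B) B) (setIidPr (rich_sub _ _ _ _)).
have B_le : #|B|%:R <= n by rewrite ler_nat max_card.
have LA_le : #|LA|%:R <= n by rewrite ler_nat max_card.
have t1 := ler_pM (ler0n _ _) (mulr_ge0 (ltW D_gt0) (ler0n _ _)) B_le HA_le.
have t2 := ler_pM (ler0n _ _) (mulr_ge0 (ltW D_gt0) (ler0n _ _)) LA_le HB_le.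
have t3 := ler_pM (ltW D_gt0) (mulr_ge0 (ler0n _ _) (ler0n _ _)) D_le L_le.
have -> : D * #|A|%:R * #|B|%:R = #|B|%:R * (D * #|rich e D B A|%:R)
    + #|LA|%:R * (D * #|rich e D A B|%:R) + D * (#|LB|%:R * #|LA|%:R).
  by rewrite cardA cardB; ring.
lra.
Qed.

Lemma e_between_ge_hits :
  (D / (3 * #|T|%:R)) ^+ 2 * #|A|%:R * #|B|%:R <= (e_between e A B)%:R.
Proof.
set E : R := (e_between e A B)%:R; set n : R := #|T|%:R.
have n_gt0 : 0 < n := lt_le_trans D_gt0 D_le.
set c := D / (3 * n).
have c_ge0 : 0 <= c by rewrite divr_ge0 ?ltW ?mulr_gt0.
have c_le1 : c <= 1 by rewrite ler_pdivrMr ?mulr_gt0 //; have := D_le; lra.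
have [few_rich|many_rich] := ltrP #|rich e D A B|%:R D.
  have -> : c ^+ 2 * #|A|%:R * #|B|%:R = c * (D * #|A|%:R * #|B|%:R) / (3 * n).
    by rewrite /c; field; rewrite gt_eqF.
  rewrite ler_pdivrMr ?mulr_gt0 //.
  have := ler_wpM2l c_ge0 (e_between_ge_few_rich few_rich).
  have : c * (3 * n * E) <= 3 * n * E.
    exact: ler_piMl (mulr_ge0 (mulr_ge0 (ler0n _ 3) (ltW n_gt0)) (ler0n _ _)) c_le1.
  lra.
have AB_le : #|A|%:R * #|B|%:R <= n * n by rewrite ler_pM ?ler_nat ?max_card.
have DD_le : D * D <= E := le_trans (ler_wpM2l (ltW D_gt0) many_rich) rich_B_le.
have cn : c ^+ 2 * (n * n) = D * D / 9 by rewrite /c; field; rewrite gt_eqF.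
have := ler_wpM2l (sqr_ge0 c) AB_le; have := mulr_ge0 (ltW D_gt0) (ltW D_gt0).
rewrite -mulrA; lra.
Qed.

End PoorVertices.

Lemma exprSS_mulSn_le (R : realFieldType) (p : R) (m : nat) :
  0 <= p <= 1 / 2 -> p ^+ m.+2 * m.+1%:R <= p ^+ 2.
Proof.
move=> /andP[p_ge0 p_le]; rewrite div1r in p_le.
have pm : p ^+ m <= 2^-1 ^+ m by rewrite lerXn2r ?nnegrE ?invr_ge0.
have m_le : m.+1%:R <= 2 ^+ m :> R by rewrite -natrX ler_nat ltn_expl.
have pm_m : p ^+ m * m.+1%:R <= 1.
  apply: le_trans (ler_pM (exprn_ge0 _ p_ge0) (ler0n _ _) pm m_le) _.
  by rewrite -exprMn mulVf ?expr1n ?pnatr_eq0.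
rewrite -addn2 exprD mulrAC -[X in _ <= X]mul1r ler_wpM2r ?exprn_ge0 //.
Qed.

Lemma powR_le_sqr_div (R : realType) (p x : R) :
  0 < p <= 1 / 2 -> 2 < x -> p `^ x <= p ^+ 2 / (x - 2).
Proof.
move=> /andP[p_gt0 p_le] x_gt2; have x_ge0 : 0 <= x by lra.
rewrite ler_pdivlMr ?subr_gt0 //.
have /andP[] := truncn_itv x_ge0; have : (2 <= Num.truncn x)%N by rewrite truncn_ge_nat // ltW.
case: (Num.truncn x) => [|[|m]] // _ m_le m_gt.
have pow_le : p `^ x <= p ^+ m.+2.
  rewrite -powR_mulrn ?(ltW p_gt0) //; apply: ger_powR m_le; rewrite p_gt0 /=; lra.
apply: le_trans (exprSS_mulSn_le m _); last by rewrite ltW.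
have x2_le : x - 2 <= m.+1%:R by move: m_gt; rewrite -!natr1; lra.
apply: ler_pM => //; [exact: powR_ge0 | lra].
Qed.

Lemma powR_invX4_le (R : realType) (M p q : R) :
  0 < M -> 0 < p <= 1 / 2 -> 0 < q -> q * (M + 2) <= 1 ->
  p `^ (q^-1 ^+ 4) * q ^+ 5 <= p ^+ 2 * q ^+ 8 / M.
Proof.
move=> M_gt0 p_range q_gt0 qM; set x := q^-1 ^+ 4.
have q_ge0 := ltW q_gt0.
have q_le1 : q <= 1 by have := mulr_ge0 q_ge0 (ltW M_gt0); lra.
have qx : q * (q ^+ 3 * x) = 1.
  by rewrite /x mulrA -exprS exprVn mulfV // expf_neq0 // gt_eqF.
have q4_le : q ^+ 4 <= q.
  by rewrite exprS ler_piMr ?exprn_ge0 // exprn_ile1.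
have key : M + 2 * q ^+ 3 <= q ^+ 3 * x by rewrite -(ler_pM2l q_gt0) qx; lra.
have q3_gt0 : 0 < q ^+ 3 := exprn_gt0 3 q_gt0.
have x_gt2 : 2 < x by rewrite -(ltr_pM2l q3_gt0); lra.
have h1 : p `^ x * (x - 2) <= p ^+ 2.
  by rewrite -ler_pdivlMr ?subr_gt0 //; apply: powR_le_sqr_div.
have h2 : M <= q ^+ 3 * (x - 2) by lra.
rewrite ler_pdivlMr //.
have := ler_wpM2l (mulr_ge0 (powR_ge0 p x) (exprn_ge0 5 q_ge0)) h2.
have := ler_wpM2l (exprn_ge0 8 q_ge0) h1.
lra.
Qed.

Lemma powR_invX4_le_sqr (R : realType) (p q : R) (K : nat) :
  0 < p <= 1 / 2 -> 0 < q -> q * (864 ^+ 2 + 2) <= 1 -> q ^+ 2 * K%:R <= 9 -> (0 < K)%N ->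
  p `^ (q^-1 ^+ 4) * q ^+ 5 <= (p * q ^+ 2 / (96 * K%:R)) ^+ 2.
Proof.
move=> p_range q_gt0 qM qK K_gt0.
apply: le_trans (powR_invX4_le _ p_range q_gt0 qM) _; first exact: exprn_gt0.
have d_gt0 : 0 < 96 * K%:R * q ^+ 2 by rewrite !mulr_gt0 ?ltr0n ?exprn_gt0.
have d_le : (96 * K%:R * q ^+ 2) ^+ 2 <= 864 ^+ 2.
  by rewrite lerXn2r ?nnegrE ?(ltW d_gt0) //; lra.
have -> : (p * q ^+ 2 / (96 * K%:R)) ^+ 2 = p ^+ 2 * q ^+ 8 / (96 * K%:R * q ^+ 2) ^+ 2.
  by field; rewrite !gt_eqF ?ltr0n ?exprn_gt0.
rewrite ler_pdivlMr ?exprn_gt0 // mulrAC ler_pdivrMr ?exprn_gt0 //.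
apply: ler_wpM2l d_le; exact: mulr_ge0 (sqr_ge0 p) (exprn_ge0 8 (ltW q_gt0)).
Qed.

Lemma exists_nat_mul_in_8_9 (R : realType) (a : R) :
  0 < a <= 1 -> exists2 K : nat, (0 < K)%N & 8 < a * K%:R <= 9.
Proof.
move=> /andP[a_gt0 a_le1]; exists (Num.truncn (8 / a)).+1 => //.
have /andP[lo hi] := truncn_itv (divr_ge0 (ler0n R 8) (ltW a_gt0)).
move: lo hi; set k := Num.truncn _.
rewrite ler_pdivlMr // ltr_pdivrMr // -[k.+1%:R]natr1 => lo hi.
lra.
Qed.

Lemma sqr_mul_expRN_eventually_le (R : realType) (a C eps : R) :
  0 < a -> 0 <= C -> 0 < eps ->
  exists N : nat, forall n : nat, (N <= n)%N ->
    (n * n)%:R * C * expR (- (a * n%:R)) <= eps.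
Proof.
move=> a_gt0 C_ge0 eps_gt0; pose b := 6 * C / (a ^+ 3 * eps).
have b_ge0 : 0 <= b by rewrite divr_ge0 ?mulr_ge0 ?exprn_ge0 // ltW.
exists (Num.truncn b).+1 => n le_n.
have b_lt : b < n%:R.
  have /andP[_ b_lt] := truncn_itv b_ge0.
  by apply: lt_le_trans b_lt _; rewrite ler_nat.
have n_gt0 : 0 < n%:R :> R := le_lt_trans b_ge0 b_lt.
have C_le : 6 * C <= n%:R * (a ^+ 3 * eps).
  by move: b_lt; rewrite ltr_pdivrMr ?mulr_gt0 ?exprn_gt0 // => /ltW.
have y_ge0 : 0 <= a * n%:R by rewrite mulr_ge0 // ltW.
have := expR_ge1Dxn 2 y_ge0; rewrite (_ : (3`!)%:R = 6 :> R) // => exp_ge.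
rewrite expRN ler_pdivrMr ?expR_gt0 //.
have := ler_wpM2l (ltW eps_gt0) exp_ge.
have := ler_wpM2l (mulr_ge0 (ler0n R n) (ler0n R n)) C_le.
rewrite natrM; have -> : (a * n%:R) ^+ 3 = a ^+ 3 * n%:R ^+ 3 by rewrite exprMn.
have := mulr_ge0 (ltW eps_gt0) (exprn_ge0 3 y_ge0).
lra.
Qed.

Lemma prob_supersets_cut_dense (R : realType) (T : finType) (e : rel T) (p q : R) (K : nat) :
  simple_graph e -> cut_dense e q -> 0 < q <= 1 -> 0 < p <= 1 ->
  4 <= #|T|%:R :> R -> 8 < q ^+ 2 * K%:R ->
  1 - (#|T| * #|T| * K)%:R * expR (- (p * q ^+ 2 / (16 * K%:R) * #|T|%:R))
  <= prob_random_subset p (fun S : {set T} => [forall U : {set T}, (S \subset U) ==>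
                            cut_dense_on e U ((p * q ^+ 2 / (96 * K%:R)) ^+ 2)]).
Proof.
move=> e_simple e_dense /andP[q_gt0 q_le1] /andP[p_gt0 p_le1] T_ge4 K_large.
have K_gt0 : 0 < K%:R :> R.
  by move: K_large; case: K => [|K]; rewrite ?ltr0n // mulr0n mulr0; lra.
set n : R := #|T|%:R; have n_gt0 : 0 < n by lra.
pose th := q ^+ 2 * n / (4 * K%:R); pose D := p * th / 8.
have th_gt0 : 0 < th by rewrite /th !(divr_gt0, mulr_gt0) ?exprn_gt0.
have Kth : K%:R * th <= q ^+ 2 * n / 4.
  by rewrite (_ : K%:R * th = q ^+ 2 * n / 4) // /th; field; rewrite gt_eqF.
have cover u v : exists2 j, (j <= K)%N & v \in level e th u j.
  apply/mem_reach.
  by rewrite (reach_cover u e_simple e_dense q_gt0 q_le1 T_ge4 (ltW th_gt0) Kth K_large) inE.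
have D_gt0 : 0 < D by rewrite /D !(divr_gt0, mulr_gt0).
have D_le : D <= n.
  have pq_le1 : p * q ^+ 2 <= 1.
    by apply: mulr_ile1; rewrite ?exprn_ge0 ?exprn_ile1 // ltW.
  have K_ge1 : 1 <= K%:R :> R by rewrite ler1n -(ltr_nat R).
  have -> : D = p * q ^+ 2 / (32 * K%:R) * n by rewrite /D /th; field; rewrite gt_eqF.
  by apply: ler_piMl; [exact: ltW | rewrite ler_pdivrMr ?mulr_gt0 //; lra].
have p01 : 0 <= p <= 1 by rewrite (ltW p_gt0).
have -> : p * q ^+ 2 / (16 * K%:R) * n = p * th / 4.
  by rewrite /th; field; rewrite gt_eqF.
apply: le_trans (prob_hits_levels e th K p01) _.
apply: le_prob_random_subset => // S S_hits.
apply/forallP => U; apply/implyP => S_U; apply/forallP => A; apply/forallP => B.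
apply/implyP => /andP[_ /eqP AB_U].
have S_hits2 : hits_levels e th K (2 * D) S by rewrite (_ : 2 * D = p * th / 4) // /D; field.
have S_AB : S \subset A :|: B by rewrite AB_U.
suff <- : D / (3 * n) = p * q ^+ 2 / (96 * K%:R).
  exact: e_between_ge_hits S_hits2 S_AB cover e_simple D_gt0 D_le.
by rewrite /D /th; field; rewrite !gt_eqF.
Qed.

Theorem lemma3p12 (R : realType) :
  exists c : R, 0 < c /\
  forall p q : R, 0 < p < c -> 0 < q < c ->
  forall eps : R, 0 < eps ->
  exists N : nat, forall n : nat, (N <= n)%N ->
  forall e : rel 'I_n, simple_graph e -> cut_dense e q ->
    1 - eps <= prob_random_subset p
      (fun S : {set 'I_n} =>
         [forall U : {set 'I_n}, (S \subset U) ==>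
            cut_dense_on e U (powR p (q ^-1 ^+ 4) * q ^+ 5)]).
Proof.
pose M : R := 864 ^+ 2.
have M_gt0 : 0 < M by rewrite exprn_gt0.
have M2_gt0 : 0 < M + 2 by lra.
exists (M + 2)^-1; split; first by rewrite invr_gt0.
have small c : 0 < c < (M + 2)^-1 -> [/\ 0 < c, c * (M + 2) <= 1 & c <= 1 / 2].
  move=> /andP[c_gt0]; rewrite -div1r ltr_pdivlMr // => /ltW cM.
  split=> //; have := mulr_ge0 (ltW c_gt0) (ltW M_gt0); lra.
move=> p q /small[p_gt0 _ p_le] /small[q_gt0 qM q_le] eps eps_gt0.
have q01 : 0 < q <= 1 by rewrite q_gt0 /=; lra.
have q2_range : 0 < q ^+ 2 <= 1 by rewrite expr2; apply/andP; split; nra.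
have [K K_gt0 /andP[K_lo K_hi]] := exists_nat_mul_in_8_9 q2_range.
pose a := p * q ^+ 2 / (16 * K%:R).
have a_gt0 : 0 < a by rewrite !(divr_gt0, mulr_gt0) ?exprn_gt0 ?ltr0n.
have [N N_large] := sqr_mul_expRN_eventually_le a_gt0 (ler0n R K) eps_gt0.
exists (maxn 4 N) => n; rewrite geq_max => /andP[n_ge4 /N_large n_large] e e_simple e_dense.
have p01 : 0 < p <= 1 by rewrite p_gt0 /=; lra.
have n_ge4' : 4 <= #|'I_n|%:R :> R by rewrite card_ord ler_nat.
have mid := prob_supersets_cut_dense e_simple e_dense q01 p01 n_ge4' K_lo.
rewrite card_ord in mid; apply: le_trans (le_trans _ mid) _.
  by rewrite lerD2l lerN2 natrM.
apply: le_prob_random_subset => [|S /forallP S_dense]; first by case/andP: p01 => /ltW ->.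
apply/forallP => U; apply/implyP => /(implyP (S_dense U)); apply: cut_dense_onW.
by apply: powR_invX4_le_sqr; rewrite ?p_gt0.
Qed.
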